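(* Let $A$ be a $\delta$-ring and $I\subseteq A$ an ideal. Suppose that $A$ is derived $(p,I)$-complete and that $I$ is generated by a distinguished element $d$. Then the following conditions are equivalent: (1) $p,d$ is a regular sequence on $A$; (2) $d,p$ is a regular sequence on $A$; (3) $\varphi(d),d$ is a regular sequence on $A$; (4) $d,\varphi(d)$ is a regular sequence on $A$; (5) $p,\varphi(d)$ is a regular sequence on $A$; (6) $\varphi(d),p$ is a regular sequence on $A$; (7) $p,\varphi^{i+1}(d)$ is a regular sequence on $A$ for every $i\ge 0$; (8) $\varphi^{i+1}(d),p$ is a regular sequence on $A$ for every $i\ge 0$; (9) $\varphi^{i+1}(d),\varphi^{j+1}(d)$ is a regular sequence on $A$ for all $i,j\ge 0$ with $i\neq j$. Moreover, if one of these equivalent conditions holds, then $A$ is $(p,I)$-adically complete.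
   Context: Fix a prime $p$; all rings are commutative $\mathbb{Z}_{(p)}$-algebras. A $\delta$-ring is a ring $A$ with a map of sets $\delta:A\to A$ such that $\delta(0)=\delta(1)=0$, $\delta(a+b)=\delta(a)+\delta(b)+\frac{a^p+b^p-(a+b)^p}{p}$ and $\delta(ab)=a^p\delta(b)+b^p\delta(a)+p\delta(a)\delta(b)$. Its Frobenius lift is the ring endomorphism $\varphi(a)=a^p+p\delta(a)$. An element $d$ is distinguished if $\delta(d)$ is a unit. For a finitely generated ideal $\mathfrak{a}=(g_1,\dots,g_s)$, a ring $A$ is derived $\mathfrak{a}$-complete if $A\to R\lim_n (A\otimes^L_A \mathrm{Kos}(A;g_1^n,\dots,g_s^n))$ is an isomorphism in $D(A)$. *)

From HB Require Import structures.
From mathcomp Require Import all_boot all_order all_algebra.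
Set Implicit Arguments. Unset Strict Implicit. Unset Printing Implicit Defensive.
Import GRing.Theory.
Local Open Scope ring_scope.

Section Defs.
Variable A : comPzRingType.

(* A is a Z_(p)-algebra: every prime l <> p is invertible in A. *)
Definition Zp_localized (p : nat) : Prop :=
  forall l : nat, prime l -> l != p -> exists u : A, l%:R * u = 1.

(* delta-ring axioms; (a^p + b^p - (a+b)^p)/p is written as the integral
   polynomial - \sum_{0<i<p} (C(p,i)/p) a^i b^(p-i). *)
Definition delta_ring (p : nat) (delta : A -> A) : Prop :=
  [/\ delta 0 = 0, delta 1 = 0,
      forall a b, delta (a + b) = delta a + delta b
          - \sum_(1 <= i < p) ('C(p, i) %/ p)%:R * a ^+ i * b ^+ (p - i)
    & forall a b, delta (a * b) =
          a ^+ p * delta b + b ^+ p * delta a + p%:R * delta a * delta b].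

Definition frob (p : nat) (delta : A -> A) (a : A) : A := a ^+ p + p%:R * delta a.

Definition is_unit (u : A) : Prop := exists v : A, u * v = 1.

Definition distinguished (delta : A -> A) (d : A) : Prop := is_unit (delta d).

(* Regular sequence x, y on A (Stacks 00LF): x is a nonzerodivisor on A,
   y is a nonzerodivisor on A/xA, and A/(x,y)A <> 0. *)
Definition regular2 (x y : A) : Prop :=
  [/\ forall a : A, x * a = 0 -> a = 0,
      forall a b : A, y * a = x * b -> exists c : A, a = x * c
    & ~ (exists a b : A, x * a + y * b = 1)].

(* Derived g-completeness of A, for a single element g (Stacks 091S/091T):
   T(A,g) = R lim (... -g-> A -g-> A) vanishes, i.e. both lim and lim^1 of the
   tower vanish; the two-term complex computing it is
   prod A -> prod A, (x_n) |-> (x_n - g x_{n+1}). *)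
Definition derived_complete_elem (g : A) : Prop :=
  (forall x : nat -> A, (forall n, x n = g * x n.+1) -> forall n, x n = 0) /\
  (forall y : nat -> A, exists x : nat -> A, forall n, y n = x n - g * x n.+1).

(* Derived completeness w.r.t. the ideal generated by a finite list of
   elements: derived complete w.r.t. each generator (Stacks 091Q). *)
Definition derived_complete (gs : seq A) : Prop :=
  forall g, g \in gs -> derived_complete_elem g.

Definition in_pow_pd (p d : A) (n : nat) (x : A) : Prop :=
  exists c : nat -> A, x = \sum_(i < n.+1) c i * p ^+ i * d ^+ (n - i).

(* (p,d)-adic completeness: A -> lim_n A/(p,d)^n is bijective. *)
Definition adically_complete_pd (p d : A) : Prop :=
  (forall x : A, (forall n, in_pow_pd p d n x) -> x = 0) /\
  (forall a : nat -> A, (forall n, in_pow_pd p d n (a n.+1 - a n)) ->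
     exists x : A, forall n, in_pow_pd p d n (x - a n)).

End Defs.

(* Regularity of [x, y] does not change when [y] is replaced by a power of
   [y], or by [u y] modulo [x] for a unit [u]; and [x, y] can be reversed to
   [y, x] as soon as no nonzero [y]-torsion element starts an infinite
   [x]-divisible chain.  Derived completeness kills such chains, for [x]
   itself and for any [x] a power of which lies in [yA + qA] with [A] derived
   [q]-complete.
   Derived [p]-completeness makes [1 + pA] consist of units, so the congruence
   [delta (phi x) = delta x ^ p mod p] shows that every [phi^k d] is
   distinguished.  Hence [phi^(k+1) e] is a unit times [p] modulo [e] for
   distinguished [e], while [phi^k a = a ^ (p ^ k)] modulo [p]; together with
   the two facts above, these congruences reduce each of the nine conditions
   to the regularity of [p, d].
   If [p, d] is regular, then [p^m A] is closed for the [d]-adic topology, so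
   an element of all the powers of [(p, d)] is divisible by every power of the
   nonzerodivisor [p], hence zero; limits of Cauchy sequences are obtained by
   summing the increments with derived completeness in [d] and then in [p]. *)

From mathcomp Require Import all_boot all_order all_algebra.
From mathcomp Require Import ring zify.
From Stdlib Require Import IndefiniteDescription.
Set Implicit Arguments. Unset Strict Implicit. Unset Printing Implicit Defensive.
Import GRing.Theory.
Local Open Scope ring_scope.

Section RegularSequences.
Variable A : comPzRingType.
Implicit Types x y q u z : A.

Lemma is_unitX u n : is_unit u -> is_unit (u ^+ n).
Proof. by move=> [u' uu']; exists (u' ^+ n); rewrite -exprMn uu' expr1n. Qed.

Lemma exprD_mulr_mod x q z n : exists s, (x + q * z) ^+ n = x ^+ n + q * s.
Proof.
elim: n => [|n [s IH]]; first by exists 0; rewrite !expr0 mulr0 addr0.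
by exists (x * s + z * (x ^+ n + q * s)); rewrite !exprS IH; ring.
Qed.

Lemma regular2_unit_mulD x y u z :
  is_unit u -> regular2 x y -> regular2 x (u * y + x * z).
Proof.
move=> [u' uu'] [x_nzd y_nzd_mod nontriv]; split=> // [a b e|[a [b e]]].
- have [c uac] : exists c, u * a = x * c.
    by apply: (y_nzd_mod _ (b - z * a)); rewrite mulrBr -e; ring.
  by exists (u' * c); rewrite -[a]mul1r -uu' mulrAC uac; ring.
- by apply: nontriv; exists (a + z * b), (u * b); rewrite -e; ring.
Qed.

Lemma regular2_unit_mulD_iff x y u z :
  is_unit u -> regular2 x (u * y + x * z) <-> regular2 x y.
Proof.
move=> [u' uu']; split=> [xy'|]; last by apply: regular2_unit_mulD; exists u'.
rewrite (_ : y = u' * (u * y + x * z) + x * (- u' * z)).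
  by apply: regular2_unit_mulD xy'; exists u; rewrite mulrC.
by rewrite -{1}[y]mul1r -uu'; ring.
Qed.

Lemma regular2_expr x y n : regular2 x (y ^+ n.+1) <-> regular2 x y.
Proof.
split=> -[x_nzd y_nzd_mod nontriv]; split=> //.
- move=> a b e; apply: (y_nzd_mod a (y ^+ n * b)).
  by rewrite exprSr -mulrA e; ring.
- move=> [a [b e]]; apply: nontriv.
  have [s ybn] := exprD_mulr_mod (y * b) x a n.+1.
  by exists s, (b ^+ n.+1); rewrite -exprMn addrC -ybn addrC e expr1n.
- elim: n => [|n IH] a b; first by rewrite expr1; apply: y_nzd_mod.
  rewrite exprS -mulrA => /y_nzd_mod [c ac]; apply: (IH a c).
  by rewrite -ac.
- by move=> [a [b e]]; apply: nontriv; exists a, (y ^+ n * b); rewrite mulrA -exprS.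
Qed.

Definition divisible_torsion_vanishes x y :=
  forall a : nat -> A,
    (forall n, a n = x * a n.+1) -> (forall n, y * a n = 0) -> a 0%N = 0.

Lemma regular2_swap x y :
  regular2 x y -> divisible_torsion_vanishes x y -> regular2 y x.
Proof.
move=> [x_nzd y_nzd_mod nontriv] chain; split.
- have [g gP] : exists g : A -> A,
      forall a, y * a = 0 -> a = x * g a /\ y * g a = 0.
    apply: (functional_choice (fun a c => y * a = 0 -> a = x * c /\ y * c = 0)).
    move=> a.
    have [ya0|ya_neq0] := eqVneq (y * a) 0; last first.
      by exists 0 => ya0; rewrite ya0 eqxx in ya_neq0.
    have [c ac] : exists c, a = x * c by apply: (y_nzd_mod a 0); rewrite ya0 mulr0.
    exists c => _; split=> //; apply: x_nzd.
    by rewrite mulrCA -ac.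
  move=> a0 ya0; pose a n := iter n g a0.
  have ya n : y * a n = 0 by elim: n => [|n IH] //; exact: (gP _ IH).2.
  by apply: (chain a) => // n; exact: (gP _ (ya n)).1.
- move=> a b e; have [c bc] := y_nzd_mod b a (esym e).
  exists c; apply/eqP; rewrite -subr_eq0; apply/eqP; apply: x_nzd.
  by rewrite mulrBr e bc; ring.
- by move=> [a [b e]]; apply: nontriv; exists b, a; rewrite addrC.
Qed.

Lemma regular2_swap_complete x y :
  derived_complete_elem x -> regular2 x y -> regular2 y x.
Proof. by move=> [x_lim _] xy; apply: regular2_swap xy _ => a /x_lim. Qed.

(* As [y] kills the chain [a], [x ^+ N] acts on it as [- q * z]; hence
   [(- z) ^+ k * a (k * N)] is a [q]-divisible chain. *)
Lemma divisible_torsion_vanishes_mod x y q z c N :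
  derived_complete_elem q -> y * c = x ^+ N + q * z ->
  divisible_torsion_vanishes x y.
Proof.
move=> [q_lim _] yc a a_chain ya.
have a_pow k n : a n = x ^+ k * a (n + k)%N.
  by elim: k => [|k IH]; rewrite ?expr0 ?mul1r ?addn0 // IH a_chain exprSr -mulrA addnS.
have a_step n : a n = q * (- z * a (n + N)%N).
  have : (x ^+ N + q * z) * a (n + N)%N = 0 by rewrite -yc mulrAC ya mul0r.
  by rewrite (a_pow N n) => h; apply/eqP; rewrite -subr_eq0 -h; apply/eqP; ring.
pose b k := (- z) ^+ k * a (k * N)%N.
have b_chain k : b k = q * b k.+1 by rewrite /b a_step mulSnr exprS; ring.
by have := q_lim b b_chain 0%N; rewrite /b mul0n expr0 mul1r.
Qed.

Lemma complete_unit1D q y : derived_complete_elem q -> is_unit (1 + q * y).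
Proof.
(* [x 0] plays the role of the geometric series [\sum_n (- q * y) ^+ n]. *)
move=> [q_lim q_lim1]; have [x xP] := q_lim1 (fun n => (- y) ^+ n).
have c_chain n : - y * x n - x n.+1 = q * (- y * x n.+1 - x n.+2).
  apply/eqP; rewrite -subr_eq0; apply/eqP.
  have : - y * (- y) ^+ n - (- y) ^+ n.+1 = 0 by rewrite exprS subrr.
  by rewrite {1}xP xP => <-; ring.
have x1 : x 1%N = - y * x 0%N.
  by apply/eqP; rewrite eq_sym -subr_eq0; apply/eqP; exact: (q_lim _ c_chain 0%N).
have x0 : 1 = x 0%N - q * x 1%N by rewrite -(xP 0%N).
by exists (x 0%N); rewrite [RHS]x0 x1; ring.
Qed.

Lemma complete_unitD q u z :
  derived_complete_elem q -> is_unit u -> is_unit (u + q * z).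
Proof.
move=> q_complete [u' uu']; have [w hw] := complete_unit1D (z * u') q_complete.
by exists (u' * w); rewrite -hw -[in RHS]uu'; ring.
Qed.

End RegularSequences.

Section AdicCompleteness.
Variable A : comPzRingType.
Implicit Types P D x : A.

Lemma nzd_expr P m a : (forall b, P * b = 0 -> b = 0) -> P ^+ m * a = 0 -> a = 0.
Proof.
move=> P_nzd; elim: m a => [|m IH] a; first by rewrite expr0 mul1r.
by rewrite exprSr -mulrA => /IH /P_nzd.
Qed.

Lemma regular2_dvd_expr P D m a b :
  regular2 P D -> D * a = P ^+ m * b -> exists c, a = P ^+ m * c.
Proof.
move=> PD; case: (PD) => P_nzd D_nzd _; elim: m a b => [|m IH] a b.
  by move=> _; exists a; rewrite expr0 mul1r.
rewrite exprS -mulrA => e; have [a1 a_a1] := D_nzd _ _ e.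
have [|c a1c] := IH a1 b; last by exists c; rewrite a_a1 a1c mulrA.
apply/eqP; rewrite -subr_eq0; apply/eqP; apply: P_nzd.
by rewrite mulrBr mulrCA -a_a1 e subrr.
Qed.

Lemma regular2_expr_dvd_expr P D m n a b :
  regular2 P D -> D ^+ n * a = P ^+ m * b -> exists c, a = P ^+ m * c.
Proof.
case: n => [|n] PD; first by rewrite expr0 mul1r => ->; exists b.
by apply: regular2_dvd_expr; rewrite regular2_expr.
Qed.

Lemma expr_ideal_dadic_closed P D m x :
  regular2 P D -> derived_complete_elem D ->
  (forall n, exists u v, x = P ^+ m * u + D ^+ n * v) -> exists c, x = P ^+ m * c.
Proof.
move=> PD [D_lim D_lim1] /functional_choice [U /functional_choice [V UV]].
have V_step n : exists c, V n - D * V n.+1 = P ^+ m * c.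
  apply: (regular2_expr_dvd_expr (n := n) (b := U n.+1 - U n) PD).
  apply/eqP; rewrite -subr_eq0 -[0](subrr x) {1}(UV n) (UV n.+1) exprSr.
  by apply/eqP; ring.
have [C VC] := functional_choice _ V_step.
have [X XC] := D_lim1 C.
have W_chain n : V n - P ^+ m * X n = D * (V n.+1 - P ^+ m * X n.+1).
  apply/eqP; rewrite -subr_eq0 -[0](subrr (V n - D * V n.+1)) {2}VC XC.
  by apply/eqP; ring.
have /eqP := D_lim _ W_chain 0%N; rewrite subr_eq0 => /eqP V0.
by exists (U 0%N + X 0%N); rewrite (UV 0%N) expr0 mul1r V0 mulrDr.
Qed.

Lemma derived_complete_separated P x :
  (forall b, P * b = 0 -> b = 0) -> derived_complete_elem P ->
  (forall m, exists c, x = P ^+ m * c) -> x = 0.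
Proof.
move=> P_nzd [P_lim _] /functional_choice [C xC].
have C_chain n : C n = P * C n.+1.
  apply/eqP; rewrite -subr_eq0; apply/eqP; apply: (nzd_expr (m := n) P_nzd).
  by rewrite mulrBr mulrA -exprSr -!xC subrr.
by rewrite (xC 0%N) (P_lim _ C_chain 0%N) mulr0.
Qed.

Lemma in_pow_pd_split P D n x :
  in_pow_pd P D (n + n) x -> exists u v, x = P ^+ n * u + D ^+ n * v.
Proof.
move=> [c ->].
apply: (big_ind (fun y => exists u v, y = P ^+ n * u + D ^+ n * v)).
- by exists 0, 0; rewrite !mulr0 addr0.
- by move=> y z [u [v ->]] [u' [v' ->]]; exists (u + u'), (v + v'); ring.
move=> i _; case: (leqP n i) => [le_ni|lt_in].
  exists (c i * P ^+ (i - n) * D ^+ (n + n - i)), 0.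
  have -> : P ^+ i = P ^+ n * P ^+ (i - n) by rewrite -exprD subnKC.
  by ring.
exists 0, (c i * P ^+ i * D ^+ (n - i)).
by rewrite -addnBA 1?ltnW // exprD; ring.
Qed.

Lemma regular2_pd_separated P D x :
  regular2 P D -> derived_complete_elem P -> derived_complete_elem D ->
  (forall n, in_pow_pd P D n x) -> x = 0.
Proof.
move=> PD P_complete D_complete x_in; have [P_nzd _ _] := PD.
apply: derived_complete_separated P_nzd P_complete _ => m.
apply: expr_ideal_dadic_closed PD D_complete _ => n.
have [u [v ->]] := in_pow_pd_split (x_in (maxn m n + maxn m n)%N).
exists (P ^+ (maxn m n - m) * u), (D ^+ (maxn m n - n) * v).
by rewrite !mulrA -!exprD !subnKC ?leq_maxl ?leq_maxr.
Qed.

(* With [a n.+1 - a n = \sum_i c n i * P ^+ i * D ^+ (n - i)], sum each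
   column [c (i + j) i]_j by derived [D]-completeness, then the resulting row
   by derived [P]-completeness. *)
Lemma pd_cauchy_converges P D (a : nat -> A) :
  derived_complete_elem P -> derived_complete_elem D ->
  (forall n, in_pow_pd P D n (a n.+1 - a n)) ->
  exists x, forall n, in_pow_pd P D n (x - a n).
Proof.
move=> [_ P_lim1] [_ D_lim1] /functional_choice [c ac].
have [X XP] := functional_choice _ (fun i => D_lim1 (fun j => c (i + j)%N i)).
have [Y YP] := P_lim1 (fun i => X i 0%N).
have partial_sum n : Y 0%N - (a n - a 0%N) =
    \sum_(i < n) P ^+ i * D ^+ (n - i) * X i (n - i)%N + P ^+ n * Y n.
  elim: n => [|n IH]; first by rewrite big_ord0 expr0; ring.
  rewrite (_ : a n.+1 - a 0%N = (a n - a 0%N) + (a n.+1 - a n)); last by ring.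
  have cnn := XP n 0%N; rewrite addn0 in cnn.
  rewrite opprD addrA IH ac !big_ord_recr /= subnn subSnn expr0 expr1 cnn (YP n).
  rewrite (_ : \sum_(i < n) P ^+ i * D ^+ (n.+1 - i) * X i (n.+1 - i)%N =
      \sum_(i < n) P ^+ i * D ^+ (n - i) * X i (n - i)%N -
      \sum_(i < n) c n i * P ^+ i * D ^+ (n - i)); first by rewrite exprS; ring.
  rewrite -sumrB; apply: eq_bigr => i _.
  have le_in : (i <= n)%N by exact: ltnW.
  have := XP i (n - i)%N; rewrite subnKC // => ->.
  by rewrite subSn // exprSr; ring.
exists (a 0%N + Y 0%N) => n.
exists (fun i => if (i < n)%N then X i (n - i)%N else Y n).
rewrite (_ : _ - a n = Y 0%N - (a n - a 0%N)); last by ring.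
rewrite partial_sum big_ord_recr /= ltnn subnn expr0 mulr1.
by congr (_ + _); [apply: eq_bigr => i _; rewrite ltn_ord | ]; ring.
Qed.

Lemma regular2_adically_complete P D :
  regular2 P D -> derived_complete_elem P -> derived_complete_elem D ->
  adically_complete_pd P D.
Proof.
move=> PD P_complete D_complete; split=> [x|a]; first exact: regular2_pd_separated.
exact: pd_cauchy_converges.
Qed.

End AdicCompleteness.

Section FrobDefect.
Local Open Scope nat_scope.

(* (n ^ p - n) / p, written as a sum so that no divisibility argument is needed. *)
Definition frob_defect p n :=
  \sum_(m < n) \sum_(1 <= i < p) ('C(p, i) %/ p) * m ^ i.

Lemma binom_pdiv_sumE p m : prime p ->
  p * (\sum_(1 <= i < p) ('C(p, i) %/ p) * m ^ i) + m ^ p + 1 = (m + 1) ^ p.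
Proof.
move=> p_prime; have p_gt1 := prime_gt1 p_prime.
pose F i := 'C(p, i) * (1 ^ (p - i) * m ^ i).
rewrite (addnC m 1) expnDn -(big_mkord xpredT F) big_nat_recr //=.
rewrite [in RHS]big_ltn ?prime_gt0 //= big_distrr /=.
rewrite (@eq_big_nat _ _ _ 1 p _ F) => [|i /andP [i_gt0 i_ltp]]; last first.
  by rewrite /F exp1n mul1n mulnA [p * _]mulnC divnK // prime_dvd_bin // i_gt0.
by rewrite /F /= bin0 binn subn0 subnn !exp1n !expn0 !mul1n; lia.
Qed.

Lemma frob_defectE p n : prime p -> p * frob_defect p n + n = n ^ p.
Proof.
move=> p_prime; elim: n => [|n IH].
  by rewrite /frob_defect big_ord0 muln0 exp0n ?prime_gt0.
rewrite /frob_defect big_ord_recr /= -/(frob_defect p n) mulnDr.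
by rewrite -[in RHS](addn1 n) -binom_pdiv_sumE // -IH; lia.
Qed.

Lemma frob_defect_p p : prime p -> frob_defect p p + 1 = p ^ p.-1.
Proof.
move=> p_prime; have p_gt0 := prime_gt0 p_prime.
apply/eqP; rewrite -(eqn_pmul2l p_gt0) -expnS prednK // -frob_defectE //.
by rewrite mulnDr muln1.
Qed.

End FrobDefect.

Section DeltaRing.
Variables (p : nat) (A : comPzRingType) (delta : A -> A).
Hypotheses (p_prime : prime p) (deltaP : delta_ring p delta).
Local Notation phi := (frob p delta).
Implicit Types a e x y : A.

Let p_gt0 : (0 < p)%N. Proof. exact: prime_gt0. Qed.

Let expr_p x : x ^+ p = x * x ^+ p.-1.
Proof. by rewrite -exprS prednK. Qed.

Let expr_p_pred x : x ^+ p.-1 = x * x ^+ p.-2.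
Proof. by rewrite -exprS; case: (p) p_prime => [|[]]. Qed.

Lemma delta_natr n : delta n%:R = - (frob_defect p n)%:R.
Proof.
case: deltaP => delta0 delta1 deltaD _; elim: n => [|n IH].
  by rewrite delta0 /frob_defect big_ord0 oppr0.
rewrite -natr1 deltaD IH delta1 /frob_defect big_ord_recr /= natrD opprD addr0.
congr (_ - _); rewrite natr_sum; apply: eq_bigr => i _.
by rewrite natrM natrX expr1n mulr1.
Qed.

Lemma delta_natr_p : delta p%:R = 1 - p%:R ^+ p.-1.
Proof.
have := congr1 (fun k => k%:R : A) (frob_defect_p p_prime).
by rewrite /= natrD natrX delta_natr => <-; ring.
Qed.

Lemma delta_pmul y : exists s, delta (p%:R * y) = y ^+ p + p%:R * s.
Proof.
case: deltaP => _ _ _ deltaM.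
rewrite deltaM delta_natr_p expr_p !expr_p_pred.
exists (p%:R * p%:R ^+ p.-2 * delta y - y ^+ p * p%:R ^+ p.-2
        + (1 - p%:R * p%:R ^+ p.-2) * delta y).
ring.
Qed.

Lemma delta_exprS x n :
  exists s, delta (x ^+ n.+1) = n.+1%:R * (x ^+ p) ^+ n * delta x + p%:R * s.
Proof.
case: deltaP => _ _ _ deltaM; elim: n => [|n [s IH]].
  by exists 0; rewrite expr1 expr0 mulr0 addr0 !mul1r.
exists (x ^+ p * s + delta x * delta (x ^+ n.+1)).
rewrite (exprS x n.+1) deltaM IH (exprAC x n.+1 p) -[n.+2%:R]natr1.
by rewrite (exprS (x ^+ p) n); ring.
Qed.

Lemma delta_exprp x : exists s, delta (x ^+ p) = p%:R * s.
Proof.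
have [s] := delta_exprS x p.-1; rewrite prednK // => ->.
by exists ((x ^+ p) ^+ p.-1 * delta x + s); ring.
Qed.

Lemma delta_addpmul a y :
  exists s, delta (a + p%:R * y) = delta a + delta (p%:R * y) + p%:R * s.
Proof.
case: deltaP => _ _ deltaD _; rewrite deltaD.
have [s ->] : exists s,
    \sum_(1 <= i < p) ('C(p, i) %/ p)%:R * a ^+ i * (p%:R * y) ^+ (p - i) = p%:R * s.
  rewrite big_nat_cond; apply: (big_ind (fun z => exists s, z = p%:R * s)).
  - by exists 0; rewrite mulr0.
  - by move=> _ _ [s ->] [t ->]; exists (s + t); rewrite mulrDr.
  move=> i /andP [/andP [_ lt_ip] _]; rewrite -(subnSK lt_ip) exprS.
  by exists (('C(p, i) %/ p)%:R * a ^+ i * (y * (p%:R * y) ^+ (p - i.+1))); ring.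
by exists (- s); ring.
Qed.

Lemma delta_frob x : exists s, delta (phi x) = delta x ^+ p + p%:R * s.
Proof.
have [s1 ->] := delta_addpmul (x ^+ p) (delta x).
have [s2 ->] := delta_exprp x.
have [s3 ->] := delta_pmul (delta x).
by exists (s1 + s2 + s3); ring.
Qed.

Lemma frob_iter_modp a n : exists s, iter n phi a = a ^+ (p ^ n) + p%:R * s.
Proof.
elim: n => [|n [s IH]]; first by exists 0; rewrite expn0 expr1 mulr0 addr0.
rewrite iterS IH /frob; have [s' ->] := exprD_mulr_mod (a ^+ (p ^ n)) p%:R s p.
exists (s' + delta (a ^+ (p ^ n) + p%:R * s)).
by rewrite -exprM -expnSr; ring.
Qed.

Lemma regular2_p_frob_iter a n :
  regular2 p%:R (iter n phi a) <-> regular2 p%:R a.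
Proof.
have [s ->] := frob_iter_modp a n.
rewrite -[a ^+ _]mul1r regular2_unit_mulD_iff; last by exists 1; rewrite mulr1.
have pn_gt0 : (0 < p ^ n)%N by rewrite expn_gt0 p_gt0.
by rewrite -(prednK pn_gt0) regular2_expr.
Qed.

Hypothesis p_complete : derived_complete_elem (p%:R : A).

Lemma distinguished_frob_iter e n :
  distinguished delta e -> distinguished delta (iter n phi e).
Proof.
move=> e_dist; elim: n => [|n IH] //; rewrite /distinguished iterS.
have [s ->] := delta_frob (iter n phi e).
by apply: complete_unitD; last exact: is_unitX.
Qed.

Lemma frob_iter_unit_p e k : distinguished delta e ->
  exists w t, is_unit w /\ iter k.+1 phi e = w * p%:R + e * t.
Proof.
move=> e_dist; elim: k => [|k [w [t [_ IH]]]].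
  by exists (delta e), (e ^+ p.-1); split=> //; rewrite /= /frob expr_p; ring.
have [s hs] := exprD_mulr_mod (w * p%:R) e t p.
exists (delta (iter k.+1 phi e) + p%:R * (w ^+ p * p%:R ^+ p.-2)), s; split.
  by apply: complete_unitD => //; exact: distinguished_frob_iter.
rewrite iterS {1}/frob {1}IH hs exprMn (expr_p p%:R) expr_p_pred.
by ring.
Qed.

Lemma regular2_frob_iter_p e k : distinguished delta e ->
  regular2 e (iter k.+1 phi e) <-> regular2 e p%:R.
Proof.
move=> e_dist; have [w [t [w_unit ->]]] := frob_iter_unit_p k e_dist.
exact: regular2_unit_mulD_iff.
Qed.

Lemma regular2_frob_iter_swap k a b :
  iter k phi a = b -> regular2 b a <-> regular2 a b.
Proof.
move=> <-; have [s hs] := frob_iter_modp a k.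
have pk_gt0 : (0 < p ^ k)%N by rewrite expn_gt0 p_gt0.
split=> h; apply: regular2_swap h _.
  apply: (divisible_torsion_vanishes_mod
           (c := a ^+ (p ^ k).-1) (N := 1) (z := - s) p_complete).
  by rewrite expr1 hs -exprS prednK //; ring.
by apply: (divisible_torsion_vanishes_mod (c := 1) p_complete); rewrite mulr1 hs.
Qed.

Section Distinguished.
Variable d : A.
Hypotheses (d_dist : distinguished delta d) (d_complete : derived_complete_elem d).

Lemma regular2_pd_swap : regular2 p%:R d <-> regular2 d p%:R.
Proof. by split; apply: regular2_swap_complete. Qed.

Lemma regular2_pd_d_frob : regular2 p%:R d <-> regular2 d (phi d).
Proof. by rewrite regular2_pd_swap (regular2_frob_iter_p 0 d_dist). Qed.

Lemma regular2_pd_frob_d : regular2 p%:R d <-> regular2 (phi d) d.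
Proof.
by rewrite regular2_pd_d_frob (regular2_frob_iter_swap (erefl (iter 1 phi d))).
Qed.

Lemma regular2_pd_p_frob : regular2 p%:R d <-> regular2 p%:R (phi d).
Proof. by rewrite (regular2_p_frob_iter d 1). Qed.

Lemma regular2_pd_frob_p : regular2 p%:R d <-> regular2 (phi d) p%:R.
Proof.
rewrite regular2_pd_p_frob; split; first exact: regular2_swap_complete.
move=> h; apply: regular2_swap h _.
apply: (divisible_torsion_vanishes_mod
         (c := delta d) (N := 1) (z := - d ^+ p.-1) d_complete).
by rewrite expr1 /frob expr_p; ring.
Qed.

Lemma regular2_pd_p_frob_iter :
  regular2 p%:R d <-> forall i, regular2 p%:R (iter i.+1 phi d).
Proof. by split=> [pd i|/(_ 0%N)]; rewrite regular2_p_frob_iter. Qed.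

Lemma regular2_pd_frob_iter_p :
  regular2 p%:R d <-> forall i, regular2 (iter i.+1 phi d) p%:R.
Proof.
split=> [/regular2_pd_p_frob_iter pd i|/(_ 0%N) /regular2_pd_frob_p //].
exact: regular2_swap_complete.
Qed.

Lemma regular2_frob_iter_lt i j :
  (forall i, regular2 (iter i.+1 phi d) p%:R) -> (i < j)%N ->
  regular2 (iter i.+1 phi d) (iter j.+1 phi d).
Proof.
move=> iter_p lt_ij.
have -> : iter j.+1 phi d = iter (j - i.+1).+1 phi (iter i.+1 phi d).
  by rewrite -iterD addSn subnK.
by rewrite (regular2_frob_iter_p _ (distinguished_frob_iter i.+1 d_dist)).
Qed.

Lemma regular2_pd_frob_iter_pair : regular2 p%:R d <->
  forall i j, i != j -> regular2 (iter i.+1 phi d) (iter j.+1 phi d).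
Proof.
rewrite regular2_pd_frob_iter_p; split=> [iter_p i j|pair].
  rewrite neq_ltn => /orP [lt_ij|lt_ji]; first exact: regular2_frob_iter_lt.
  have iter_ji : iter (i - j) phi (iter j.+1 phi d) = iter i.+1 phi d.
    by rewrite -iterD addnS subnK // ltnW.
  by rewrite (regular2_frob_iter_swap iter_ji); exact: regular2_frob_iter_lt.
apply/regular2_pd_frob_iter_p/regular2_pd_frob_p.
apply/(regular2_frob_iter_p 0 (distinguished_frob_iter 1 d_dist)).
exact: (pair 0%N 1%N).
Qed.

Lemma regular2_pd_tfae :
  [<-> regular2 p%:R d; regular2 d p%:R;
       regular2 (phi d) d; regular2 d (phi d);
       regular2 p%:R (phi d); regular2 (phi d) p%:R;
       forall i, regular2 p%:R (iter i.+1 phi d);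
       forall i, regular2 (iter i.+1 phi d) p%:R;
       forall i j, i != j -> regular2 (iter i.+1 phi d) (iter j.+1 phi d)].
Proof.
tfae.
- by move/regular2_pd_swap.
- by move/regular2_pd_swap/regular2_pd_frob_d.
- by move/regular2_pd_frob_d/regular2_pd_d_frob.
- by move/regular2_pd_d_frob/regular2_pd_p_frob.
- by move/regular2_pd_p_frob/regular2_pd_frob_p.
- by move/regular2_pd_frob_p/regular2_pd_p_frob_iter.
- by move/regular2_pd_p_frob_iter/regular2_pd_frob_iter_p.
- by move/regular2_pd_frob_iter_p/regular2_pd_frob_iter_pair.
- by move/regular2_pd_frob_iter_pair.
Qed.

End Distinguished.
End DeltaRing.

Theorem lemma2p9 (p : nat) (A : comPzRingType) (delta : A -> A)
    (I : A -> Prop) (d : A) :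
  prime p -> Zp_localized A p -> delta_ring p delta ->
  (forall x : A, I x <-> exists a : A, x = a * d) ->
  distinguished delta d ->
  derived_complete [:: p%:R; d] ->
  let phi := frob p delta in
  [<-> regular2 p%:R d;
       regular2 d p%:R;
       regular2 (phi d) d;
       regular2 d (phi d);
       regular2 p%:R (phi d);
       regular2 (phi d) p%:R;
       forall i : nat, regular2 p%:R (iter i.+1 phi d);
       forall i : nat, regular2 (iter i.+1 phi d) p%:R;
       forall i j : nat, i != j -> regular2 (iter i.+1 phi d) (iter j.+1 phi d)]
  /\ (regular2 p%:R d -> adically_complete_pd p%:R d).
Proof.
move=> p_prime _ deltaP _ d_dist pd_complete phi.
have p_complete : derived_complete_elem (p%:R : A).
  by apply: pd_complete; rewrite inE eqxx.
have d_complete : derived_complete_elem d.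
  by apply: pd_complete; rewrite !inE eqxx orbT.
split; first exact: regular2_pd_tfae.
by move=> pd; apply: regular2_adically_complete.
Qed.
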